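(* Let $A$ be a real $m\times n$ matrix of rank $\rho$ with columns $a_1,\ldots,a_n$, and let $A=USV^*$ be its thin singular value decomposition, where $U$ ($m\times\rho$) and $V$ ($n\times\rho$) have orthonormal columns and $S=\mathrm{diag}(s_1,\ldots,s_\rho)$ with $s_1\ge\cdots\ge s_\rho\ge 0$; set $s_{\rho+1}:=0$. For $k\in[\rho]$ let $U_{[k]}$ denote the $m\times k$ matrix of the first $k$ columns of $U$ and define $F_k:\mathbb R^m\to\mathbb R^k$ by $F_k(v)=(U_{[k]})^*v$. Then $$\sup_{i,j\in[n]}\Big|\,\|a_i-a_j\|-\|F_k(a_i)-F_k(a_j)\|\,\Big|\le 2s_{k+1},$$ i.e. $F_k$ is a $2s_{k+1}$-distortion of the set of columns of $A$.
   Context: Norms on vectors are Euclidean; $[k]=\{1,\ldots,k\}$; $^*$ denotes transpose. A map $F$ on a set $\mathcal A$ is a $\mu$-distortion of $\mathcal A$ if $\sup_{x,y\in\mathcal A}|\,\|x-y\|-\|F(x)-F(y)\|\,|\le\mu$. *)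

From HB Require Import structures.
From mathcomp Require Import all_boot all_order all_algebra.
From mathcomp Require Import reals.
Set Implicit Arguments. Unset Strict Implicit. Unset Printing Implicit Defensive.
Import Order.TTheory GRing.Theory Num.Theory.
Local Open Scope ring_scope.

Definition vnorm (R : realType) (p : nat) (v : 'cV[R]_p) : R :=
  Num.sqrt (\sum_(i < p) v i 0 ^+ 2).

Definition is_distortion (R : realType) (p q : nat)
  (X : 'cV[R]_p -> Prop) (F : 'cV[R]_p -> 'cV[R]_q) (mu : R) : Prop :=
  forall x y, X x -> X y -> `| vnorm (x - y) - vnorm (F x - F y) | <= mu.

Definition first_cols (R : realType) (m r k : nat) (U : 'M[R]_(m, r))
  (hk : (k <= r)%N) : 'M[R]_(m, k) :=
  \matrix_(i < m, j < k) U i (widen_ord hk j).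

(* singular values extended by 0: index j (0-based) gives s_{j+1}; zero past r *)
Definition sv_ext (R : realType) (r : nat) (s : 'rV[R]_r) (j : nat) : R :=
  match @insub nat (fun x => (x < r)%N) 'I_r j with
  | Some i => s 0 i
  | None => 0
  end.

(* Put d = e_i - e_j and x = V^* d, so that a_i - a_j = U w with w = S x.
   Since U has orthonormal columns, ||U w|| = ||w|| and F_k (U w) lists the
   first k coordinates of w; hence ||a_i - a_j||^2 = ||F_k a_i - F_k a_j||^2 + T
   with T = sum_{l > k} s_l^2 x_l^2.  Sortedness gives T <= s_{k+1}^2 ||x||^2,
   Bessel's inequality ||x|| <= ||d|| <= sqrt 2, and p^2 = q^2 + T with
   p, q >= 0 forces |p - q| <= sqrt T <= sqrt 2 s_{k+1}. *)
From HB Require Import structures.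
From mathcomp Require Import all_boot all_order all_algebra.
From mathcomp Require Import reals.
From mathcomp Require Import lra.
Import Order.TTheory GRing.Theory Num.Theory.
Local Open Scope ring_scope.

Section EuclideanNorm.
Context {R : realType}.

Lemma sqr_vnorm {p} (v : 'cV[R]_p) : vnorm v ^+ 2 = \sum_i v i 0 ^+ 2.
Proof. by rewrite sqr_sqrtr // sumr_ge0 // => i _; apply: sqr_ge0. Qed.

Lemma mulmx_trmx_self {p} (v : 'cV[R]_p) : (v^T *m v) 0 0 = vnorm v ^+ 2.
Proof. by rewrite sqr_vnorm !mxE; apply: eq_bigr => i _; rewrite !mxE expr2. Qed.

Lemma vnormE {p} (v : 'cV[R]_p) : vnorm v = Num.sqrt ((v^T *m v) 0 0).
Proof. by rewrite mulmx_trmx_self sqrtr_sqr ger0_norm // sqrtr_ge0. Qed.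

Lemma vnorm_ge0 {p} (v : 'cV[R]_p) : 0 <= vnorm v.
Proof. exact: sqrtr_ge0. Qed.

Lemma vnorm_isometry {p r} (U : 'M[R]_(p, r)) (w : 'cV[R]_r) :
  U^T *m U = 1%:M -> vnorm (U *m w) = vnorm w.
Proof. by move=> hU; rewrite !vnormE trmx_mul -mulmxA (mulmxA U^T) hU mul1mx. Qed.

Lemma vnorm_trmx_mul_le {p r} (V : 'M[R]_(p, r)) (d : 'cV[R]_p) :
  V^T *m V = 1%:M -> vnorm (V^T *m d) <= vnorm d.
Proof.
move=> hV; set x := V^T *m d.
have residual_sqr : (d - V *m x)^T *m (d - V *m x) = d^T *m d - x^T *m x.
  rewrite (linearB (@trmx R p 1)) /= mulmxBr !mulmxBl trmx_mul.
  have dVx : d^T *m (V *m x) = x^T *m x by rewrite /x trmx_mul trmxK !mulmxA.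
  have xVd : x^T *m V^T *m d = x^T *m x by rewrite -mulmxA.
  have xVVx : x^T *m V^T *m (V *m x) = x^T *m x.
    by rewrite mulmxA -(mulmxA _ V^T) hV mulmx1.
  by rewrite dVx xVd xVVx subrr subr0.
rewrite -ler_sqr ?nnegrE ?vnorm_ge0 // -!mulmx_trmx_self -subr_ge0.
by have := sqr_ge0 (vnorm (d - V *m x)); rewrite -mulmx_trmx_self residual_sqr !mxE.
Qed.

Lemma sqr_vnorm_delta_sub {p} (i j : 'I_p) :
  vnorm (delta_mx i 0 - delta_mx j 0 : 'cV[R]_p) ^+ 2 <= 2.
Proof.
rewrite sqr_vnorm.
apply: (@le_trans _ _ (\sum_l ((l == i)%:R + (l == j)%:R : R))).
  apply: ler_sum => l _; rewrite !mxE !eqxx !andbT.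
  by case: (l == i); case: (l == j) => /=; lra.
have sum_indicator (c : 'I_p) : \sum_l ((l == c)%:R : R) = 1.
  by rewrite (bigD1 c) //= eqxx big1 ?addr0 // => l /negbTE ->.
by rewrite big_split /= !sum_indicator.
Qed.

Lemma trmx_first_cols_mul {p r k q} (U : 'M[R]_(p, r)) (hk : (k <= r)%N)
    (M : 'M[R]_(p, q)) :
  (first_cols U hk)^T *m M = \matrix_(b, c) (U^T *m M) (widen_ord hk b) c.
Proof. by apply/matrixP => b c; rewrite !mxE; apply: eq_bigr => a _; rewrite !mxE. Qed.

Lemma sqr_vnorm_first_cols_split {p r k} (U : 'M[R]_(p, r)) (hk : (k <= r)%N)
    (w : 'cV[R]_r) :
  U^T *m U = 1%:M ->
  vnorm (U *m w) ^+ 2 =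
    vnorm ((first_cols U hk)^T *m (U *m w)) ^+ 2 + \sum_(l < r | (k <= l)%N) w l 0 ^+ 2.
Proof.
move=> hU; rewrite vnorm_isometry // !sqr_vnorm (bigID (fun l : 'I_r => (l < k)%N)) /=.
congr (_ + _); last by apply: eq_bigl => l; rewrite -leqNgt.
rewrite trmx_first_cols_mul mulmxA hU mul1mx.
by rewrite (big_ord_narrow hk); apply: eq_bigr => b _; rewrite mxE.
Qed.

End EuclideanNorm.

Section SingularValues.
Context {R : realType} {r : nat} (s : 'rV[R]_r).
Hypothesis s_ge0 : forall i, 0 <= s 0 i.
Hypothesis s_sorted : forall i j : 'I_r, (i <= j)%N -> s 0 j <= s 0 i.

Lemma sv_ext_ge0 k : 0 <= sv_ext s k.
Proof. by rewrite /sv_ext; case: insubP. Qed.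

Lemma le_sv_ext k (l : 'I_r) : (k <= l)%N -> s 0 l <= sv_ext s k.
Proof.
move=> le_kl; rewrite /sv_ext; case: insubP => [o _ val_o | ].
  by apply: s_sorted; rewrite val_o.
by rewrite (leq_ltn_trans le_kl (ltn_ord l)).
Qed.

Lemma sum_sqr_diag_tail_le k (x : 'cV[R]_r) :
  \sum_(l < r | (k <= l)%N) (diag_mx s *m x) l 0 ^+ 2 <= sv_ext s k ^+ 2 * vnorm x ^+ 2.
Proof.
rewrite sqr_vnorm mulr_sumr [leRHS](bigID (fun l : 'I_r => (k <= l)%N)) /= -[leLHS]addr0.
apply: lerD; last by apply: sumr_ge0 => l _; rewrite mulr_ge0 ?sqr_ge0.
apply: ler_sum => l le_kl; rewrite mul_diag_mx mxE exprMn ler_wpM2r ?sqr_ge0 //.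
by rewrite ler_sqr ?nnegrE ?sv_ext_ge0 ?s_ge0 ?le_sv_ext.
Qed.

End SingularValues.

Lemma dist_le_of_sqr_add {R : realFieldType} {a b c e : R} :
  a ^+ 2 = b ^+ 2 + c -> 0 <= a -> 0 <= b -> 0 <= c -> 0 <= e ->
  c <= 2 * e ^+ 2 -> `|a - b| <= 2 * e.
Proof. by move=> *; rewrite ger0_norm; nra. Qed.

Theorem lemma2 (R : realType) (m n : nat) (A : 'M[R]_(m, n))
  (U : 'M[R]_(m, \rank A)) (V : 'M[R]_(n, \rank A)) (s : 'rV[R]_(\rank A))
  (hU : U^T *m U = 1%:M) (hV : V^T *m V = 1%:M)
  (hs_nonneg : forall i, 0 <= s 0 i)
  (hs_sorted : forall i j : 'I_(\rank A), (i <= j)%N -> s 0 j <= s 0 i)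
  (hsvd : A = U *m diag_mx s *m V^T)
  (k : nat) (hk1 : (1 <= k)%N) (hk : (k <= \rank A)%N) :
  is_distortion (fun x => exists i : 'I_n, x = col i A)
    (fun v : 'cV[R]_m => (first_cols U hk)^T *m v)
    (2 * sv_ext s k).
Proof.
move=> _ _ [i ->] [j ->]; rewrite -mulmxBr.
set d : 'cV[R]_n := delta_mx i 0 - delta_mx j 0.
set x := V^T *m d.
have col_sub : col i A - col j A = U *m (diag_mx s *m x).
  by rewrite !colE -mulmxBr [in LHS]hsvd !mulmxA.
have x_le : vnorm x ^+ 2 <= 2.
  apply: le_trans _ (sqr_vnorm_delta_sub i j).
  by rewrite ler_sqr ?nnegrE ?vnorm_ge0 ?vnorm_trmx_mul_le.
rewrite col_sub; apply: (dist_le_of_sqr_add (sqr_vnorm_first_cols_split U hk _ hU)).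
- exact: vnorm_ge0.
- exact: vnorm_ge0.
- by apply: sumr_ge0 => l _; apply: sqr_ge0.
- exact: sv_ext_ge0.
apply: le_trans (sum_sqr_diag_tail_le s hs_nonneg hs_sorted k x) _.
by rewrite mulrC ler_wpM2r ?sqr_ge0.
Qed.
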